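(* Each of the following four mechanisms for locating an obnoxious facility on $[0,1]$ is group strategyproof. Here, for a profile $\mathbf x\in[0,1]^n$, $n_1=|\{i:x_i\in[0,\tfrac12]\}|$ and $n_2=|\{i:x_i\in(\tfrac12,1]\}|$. (1) Majority Vote: output $y=0$ if $n_1\le n_2$, else $y=1$. (2) Output the uniform distribution over $[0,1]$. (3) Output $y=0$ with probability $\frac{n_2^2}{n_1^2+n_2^2}$ and $y=1$ with probability $\frac{n_1^2}{n_1^2+n_2^2}$. (4) For a fixed real parameter $p$, output $y=0$ with probability $P_0=\frac{n_2^2+2^pn_1n_2}{n_1^2+n_2^2+2^{p+1}n_1n_2}$ and $y=1$ with probability $1-P_0$.
   Context: Agents $i\in N=\{1,\dots,n\}$ have private locations $x_i\in[0,1]$; agent $i$'s utility from a (possibly random) facility location is its (expected) distance $\mathbb E|x_i-y|$. A mechanism $f$ is group strategyproof if for every profile $\mathbf x$, every coalition $S\subseteq N$ and every joint misreport $\mathbf x_S'$, there exists $i\in S$ whose utility under $f(\mathbf x_S',\mathbf x_{-S})$ is not strictly larger than under $f(\mathbf x)$. *)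

From HB Require Import structures.
From mathcomp Require Import all_boot all_order all_algebra.
From mathcomp Require Import all_classical all_reals all_analysis.
Set Implicit Arguments. Unset Strict Implicit. Unset Printing Implicit Defensive.
Import Order.TTheory GRing.Theory Num.Theory.
Local Open Scope classical_set_scope.
Local Open Scope ring_scope.

Section ObnoxiousFacility.
Context {R : realType}.

Definition profile (n : nat) := 'I_n -> R.

Definition in01 n (x : profile n) : Prop := forall i, 0 <= x i <= 1.

Definition n1 n (x : profile n) : nat := #|[set i | (0 <= x i) && (x i <= 1/2)]|.
Definition n2 n (x : profile n) : nat := #|[set i | (1/2 < x i) && (x i <= 1)]|.

(* A (possibly random) facility location = a distribution on R (set function). *)
Definition rloc := set R -> \bar R.

Definition lottery01 (q : R) : rloc :=
  fun A => (q%:E * \d_(0%R:R) A + (1 - q)%:E * \d_(1%R:R) A)%E.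

Definition utility (xi : R) (mu : rloc) : \bar R :=
  (\int[mu]_y (`|xi - y|)%:E)%E.

Definition mechanism n := profile n -> rloc.

Definition deviate n (S : {set 'I_n}) (x' x : profile n) : profile n :=
  fun i => if i \in S then x' i else x i.

Definition group_strategyproof n (f : mechanism n) : Prop :=
  forall (x : profile n) (S : {set 'I_n}) (x' : profile n),
    in01 x -> in01 x' -> S != finset.set0 ->
    exists2 i, i \in S &
      (utility (x i) (f (deviate S x' x)) <= utility (x i) (f x))%E.

Definition majority_vote n : mechanism n :=
  fun x => if (n1 x <= n2 x)%N then \d_(0%R:R) else \d_(1%R:R).

Definition uniform_mech n : mechanism n :=
  fun _ => uniform_prob (@ltr01 R).

Definition square_mech n : mechanism n :=
  fun x => lottery01 ((n2 x)%:R ^+ 2 / ((n1 x)%:R ^+ 2 + (n2 x)%:R ^+ 2)).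

Definition P0 (p : R) n (x : profile n) : R :=
  let a := (n1 x)%:R in let b := (n2 x)%:R in
  (b ^+ 2 + 2 `^ p * a * b) / (a ^+ 2 + b ^+ 2 + 2 `^ (p + 1) * a * b).

Definition param_mech (p : R) n : mechanism n :=
  fun x => lottery01 (P0 p x).

End ObnoxiousFacility.

From HB Require Import structures.
From mathcomp Require Import all_boot all_order all_algebra.
From mathcomp Require Import all_classical all_reals all_analysis.
From mathcomp Require Import measurable_realfun.
From mathcomp Require Import ring lra zify.
Import Order.TTheory GRing.Theory Num.Theory.
Local Open Scope ring_scope.

(* Apart from the uniform distribution, which ignores the profile, each
   mechanism puts the facility at 0 with some probability q and at 1 otherwise,
   where q depends on the profile only through n_2 (as n_1 = n - n_2) and is
   nondecreasing in it.  An agent at t gets utility 1 - t + q (2 t - 1), so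
   agents in [0, 1/2] weakly prefer a smaller q and agents in (1/2, 1] a larger
   one.  If a coalition's misreport raises n_2, one of its members must lie in
   [0, 1/2], and she does not gain; symmetrically if n_2 drops; if n_2 is
   unchanged, nobody's utility changes.  For mechanisms (3) and (4),
   monotonicity in n_2 at fixed n_1 + n_2 comes from a cross-multiplication
   identity in which the increment of n_2 splits off as a factor. *)

Section Lottery.
Context {R : realType}.

Lemma lottery01_1 : lottery01 1 = \d_(0 : R).
Proof. by apply/funext => A; rewrite /lottery01 subrr mul1e mul0e adde0. Qed.

Lemma lottery01_0 : lottery01 0 = \d_(1 : R).
Proof. by apply/funext => A; rewrite /lottery01 subr0 mul1e mul0e add0e. Qed.

Lemma utility_lottery01 (q t : R) : 0 <= q <= 1 ->
  utility t (lottery01 q) = (q * `|t| + (1 - q) * `|t - 1|)%:E.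
Proof.
move=> /andP[q0 q1]; have q1' : 0 <= 1 - q by rewrite subr_ge0.
have dist_mfun : measurable_fun [set: R] (fun y => (`|t - y|)%:E : \bar R).
  by apply/measurable_EFinP; apply: measurableT_comp => //; exact: measurable_funB.
have -> : lottery01 q = measure_add (mscale (NngNum q0) \d_(0 : R))
                                    (mscale (NngNum q1') \d_(1 : R)).
  by apply/funext => A; rewrite measure_addE.
rewrite /utility ge0_integral_measure_add // !ge0_integral_mscale //.
by rewrite !integral_dirac ?diracE ?mem_set ?mul1e //= subr0 -!EFinM -EFinD.
Qed.

Lemma utility_lottery01_in01 (q t : R) : 0 <= q <= 1 -> 0 <= t <= 1 ->
  utility t (lottery01 q) = (1 - t + q * (2 * t - 1))%:E.
Proof.
move=> q01 /andP[t0 t1]; rewrite utility_lottery01 // ger0_norm // ler0_norm ?subr_le0 //.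
by congr EFin; ring.
Qed.

End Lottery.

Section Weight.
Context {R : realFieldType}.

(* With a = n_1 and b = n_2, this is the probability of y = 0 in mechanism (3)
   for c = 0 and in mechanism (4) for c = 2^p. *)
Definition lottery_weight (c a b : R) : R :=
  b * (b + c * a) / (b * (b + c * a) + a * (a + c * b)).

Lemma lottery_weight_ge0_le1 (c a b : R) : 0 <= c -> 0 <= a -> 0 <= b ->
  0 <= lottery_weight c a b <= 1.
Proof.
move=> c0 a0 b0; rewrite /lottery_weight.
set N := b * _; set M := a * _.
have N0 : 0 <= N by rewrite mulr_ge0 // addr_ge0 // mulr_ge0.
have M0 : 0 <= M by rewrite mulr_ge0 // addr_ge0 // mulr_ge0.
have [D0|D0] := eqVneq (N + M) 0; first by rewrite D0 invr0 mulr0 lexx ler01.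
have Dp : 0 < N + M by rewrite lt_def D0 addr_ge0.
by rewrite divr_ge0 ?addr_ge0 //= ler_pdivrMr // mul1r lerDl.
Qed.

Lemma lottery_weight_cross (c a b a' b' : R) : a + b = a' + b' ->
  b' * (b' + c * a') * (a * (a + c * b)) - b * (b + c * a) * (a' * (a' + c * b'))
  = (a + b) * (b' - b) * (a * b' + a' * b + c * (a * a' + b * b')).
Proof. move=> e; have -> : a' = a + b - b' by rewrite e addrK. ring. Qed.

Lemma lottery_denom_gt0 (c a b : R) : 0 <= c -> 0 <= a -> 0 <= b -> 0 < a + b ->
  0 < b * (b + c * a) + a * (a + c * b).
Proof.
move=> c0 a0 b0 s0.
have : 0 <= (a - b) ^+ 2 by exact: sqr_ge0.
have : 0 <= c * a * b by rewrite !mulr_ge0.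
have := mulr_gt0 s0 s0.
nra.
Qed.

Lemma lottery_weight_le (c a b a' b' : R) :
  0 <= c -> 0 <= a -> 0 <= b -> 0 <= a' -> 0 <= b' ->
  a + b = a' + b' -> b <= b' -> lottery_weight c a b <= lottery_weight c a' b'.
Proof.
move=> c0 a0 b0 a'0 b'0 e bb'.
have [s0|s0] := eqVneq (a + b) 0.
  have [-> ->] : a = 0 /\ b = 0 by lra.
  have [-> ->] : a' = 0 /\ b' = 0 by lra.
  by rewrite /lottery_weight !(mulr0, mul0r, addr0).
have sp : 0 < a + b by rewrite lt_def s0 addr_ge0.
have Dp : 0 < b * (b + c * a) + a * (a + c * b) by exact: lottery_denom_gt0.
have D'p : 0 < b' * (b' + c * a') + a' * (a' + c * b').
  by apply: lottery_denom_gt0; rewrite // -e.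
rewrite /lottery_weight ler_pdivrMr // mulrAC ler_pdivlMr // -subr_ge0.
set N := b * _; set M := a * _; set N' := b' * _; set M' := a' * _.
have -> : N' * (N + M) - N * (N' + M') = N' * M - N * M' by ring.
rewrite lottery_weight_cross //.
apply: mulr_ge0; first apply: mulr_ge0; rewrite ?subr_ge0 ?(ltW sp) //.
by rewrite !addr_ge0 // !mulr_ge0 // addr_ge0 // mulr_ge0.
Qed.

End Weight.

Section Profiles.
Context {R : realType} {n : nat}.
Implicit Types (x y : @profile R n) (S : {set 'I_n}).

Definition right_half (t : R) : bool := (1/2 < t) && (t <= 1).

Lemma n2E x : n2 x = #|[pred i | right_half (x i)]|.
Proof. by apply: eq_card => i; rewrite inE; apply/idP/idP => [/set_mem | /mem_set]. Qed.

Lemma n1_add_n2 x : in01 x -> (n1 x + n2 x = n)%N.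
Proof.
move=> x01; rewrite n2E -[RHS](card_ord n) -(cardC [pred i | right_half (x i)]) addnC.
congr (_ + _)%N; apply: eq_card => i; rewrite !inE /right_half.
have /andP[x0 x1] := x01 i.
rewrite x1 andbT -leNgt; apply/idP/idP => [/set_mem /andP[] // | ?]; exact/mem_set/andP.
Qed.

Lemma n2_mono x y : (forall i, right_half (y i) -> right_half (x i)) -> (n2 y <= n2 x)%N.
Proof. by move=> yx; rewrite !n2E; apply/subset_leq_card/fintype.subsetP => i /yx. Qed.

Lemma in01_deviate S x' x : in01 x -> in01 x' -> in01 (deviate S x' x).
Proof. by move=> x01 x'01 i; rewrite /deviate; case: ifP. Qed.

Lemma deviate_n2_gt S x' x : (n2 x < n2 (deviate S x' x))%N ->
  exists2 i, i \in S & ~~ right_half (x i).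
Proof.
move=> lt_n2; apply/exists_inP; apply: contraTT lt_n2 => /exists_inPn S_right.
rewrite -leqNgt; apply: n2_mono => i; rewrite /deviate.
by case: ifP => // iS _; have := S_right i iS; rewrite negbK.
Qed.

Lemma deviate_n2_lt S x' x : (n2 (deviate S x' x) < n2 x)%N ->
  exists2 i, i \in S & right_half (x i).
Proof.
move=> lt_n2; apply/exists_inP; apply: contraTT lt_n2 => /exists_inPn S_left.
rewrite -leqNgt; apply: n2_mono => i; rewrite /deviate.
by case: ifP => // iS; have := S_left i iS => /negPf ->.
Qed.

End Profiles.

Section Strategyproofness.
Variables (R : realType) (n : nat).

Lemma const_mech_gsp (mu : @rloc R) : group_strategyproof (fun _ : profile n => mu).
Proof. by move=> x S x' _ _ /set0Pn[i iS]; exists i. Qed.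

Lemma lottery_mech_gsp (q : @profile R n -> R) :
  (forall x, in01 x -> 0 <= q x <= 1) ->
  (forall x y, in01 x -> in01 y -> (n2 x <= n2 y)%N -> q x <= q y) ->
  group_strategyproof (fun x => lottery01 (q x)).
Proof.
move=> q01 q_mono x S x' x01 x'01 S0; set y := deviate S x' x.
have y01 : in01 y by exact: in01_deviate.
suff [i iS gain] : exists2 i, i \in S & (q y - q x) * (2 * x i - 1) <= 0.
  exists i => //; rewrite !utility_lottery01_in01 ?q01 // lee_fin.
  nra.
case: (ltngtP (n2 x) (n2 y)) => [lt_n2 | lt_n2 | eq_n2].
- move: lt_n2 (lt_n2) => /deviate_n2_gt[i iS]; rewrite /right_half andbC.
  have /andP[x0 ->] := x01 i; rewrite -leNgt => le_half lt_n2; exists i => //.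
  by rewrite mulr_ge0_le0 ?subr_ge0 ?q_mono ?(ltnW lt_n2) //; lra.
- move: lt_n2 (lt_n2) => /deviate_n2_lt[i iS /andP[gt_half _] lt_n2]; exists i => //.
  by rewrite mulr_le0_ge0 ?subr_le0 ?q_mono ?(ltnW lt_n2) //; lra.
- have /set0Pn[i iS] := S0; exists i => //.
  by rewrite (@le_anti _ _ (q y) (q x)) ?q_mono ?eq_n2 // subrr mul0r.
Qed.

Lemma weight_mech_gsp (c : R) (q : @profile R n -> R) : 0 <= c ->
  (forall x, q x = lottery_weight c (n1 x)%:R (n2 x)%:R) ->
  group_strategyproof (fun x => lottery01 (q x)).
Proof.
move=> c0 qE; apply: lottery_mech_gsp => [x _ | x y x01 y01 le_n2].
  by rewrite qE lottery_weight_ge0_le1.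
rewrite !qE lottery_weight_le ?ler_nat //.
by rewrite -!natrD !n1_add_n2.
Qed.

Lemma majority_voteE : @majority_vote R n =
  (fun x => lottery01 (if (n1 x <= n2 x)%N then 1 else 0)).
Proof.
by apply/funext => x; rewrite /majority_vote; case: ifP; rewrite ?lottery01_1 ?lottery01_0.
Qed.

Lemma majority_vote_gsp : group_strategyproof (@majority_vote R n).
Proof.
rewrite majority_voteE; apply: lottery_mech_gsp => [x _ | x y x01 y01 le_n2].
  by case: ifP; rewrite ?lexx ?ler01.
have := n1_add_n2 _ x01; have := n1_add_n2 _ y01.
by case: ifP => ?; case: ifP => ? ? ?; rewrite ?lexx ?ler01 //; lia.
Qed.

Lemma uniform_mech_gsp : group_strategyproof (@uniform_mech R n).
Proof. exact: const_mech_gsp. Qed.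

Lemma square_mech_gsp : group_strategyproof (@square_mech R n).
Proof.
apply: (weight_mech_gsp 0) => // x.
by rewrite /lottery_weight !(mul0r, addr0) -!expr2 addrC.
Qed.

Lemma param_mech_gsp (p : R) : group_strategyproof (@param_mech R p n).
Proof.
apply: (weight_mech_gsp (2 `^ p)) => [|x]; first exact: powR_ge0.
rewrite /P0 /lottery_weight powRD ?powRr1 ?pnatr_eq0 ?implybT //.
by congr (_ / _); ring.
Qed.

End Strategyproofness.

Theorem lemma2 (R : realType) (n : nat) (p : R) :
  group_strategyproof (@majority_vote R n) /\
  group_strategyproof (@uniform_mech R n) /\
  group_strategyproof (@square_mech R n) /\
  group_strategyproof (@param_mech R p n).
Proof.
split; first exact: majority_vote_gsp.
split; first exact: uniform_mech_gsp.
split; [exact: square_mech_gsp | exact: param_mech_gsp].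
Qed.
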